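(* Let $p$ be an odd prime and let $\alpha$ be a root of $H_p(X,1)$. For a positive integer $M$ let $\zeta_M$ denote a primitive $M$-th root of unity. Then $\mathbb{Q}(\alpha)=\mathbb{Q}(\zeta_{4p}+\zeta_{4p}^{-1})$ (inside $\mathbb{C}$, with $\zeta_{4p}=e^{2\pi i/(4p)}$); in particular $[\mathbb{Q}(\alpha):\mathbb{Q}]=p-1$, and $\mathbb{Q}(\zeta_p+\zeta_p^{-1})\subset\mathbb{Q}(\alpha)$ for $\zeta_p=\zeta_{4p}^4$.
   Context: For an odd prime $p$ put $\delta_4=1$ if $p\equiv 1\pmod 4$, $\delta_4=-1$ if $p\equiv 3\pmod 4$. Let $G_p(u,v)=\mathrm{Im}\big((1+i)(u+iv)^p\big)\in\mathbb{Z}[u,v]$ (for real $u,v$); $u+\delta_4 v$ divides $G_p$ in $\mathbb{Z}[u,v]$, and $H_p(u,v):=G_p(u,v)/(u+\delta_4 v)\in\mathbb{Z}[u,v]$. The roots of $H_p(X,1)$ are the $p-1$ real numbers $\tan\frac{(4j+3)\pi}{4p}$, $j\in\{0,\dots,p-1\}$, different from $-\delta_4$. *)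

From HB Require Import structures.
From mathcomp Require Import all_boot all_order all_algebra all_field.
Set Implicit Arguments. Unset Strict Implicit. Unset Printing Implicit Defensive.
Import Order.TTheory GRing.Theory Num.Theory.
Local Open Scope ring_scope.

Definition delta4 (p : nat) : algC := if (p %% 4 == 1)%N then 1 else -1.

(* G_p(X,1) = Im((1+i)(X+i)^p) for real X: the polynomial whose coefficients
   are the imaginary parts of those of (1+i)(X+i)^p. *)
Definition Gp (p : nat) : {poly algC} :=
  map_poly (fun c : algC => 'Im c) ((1 + 'i)%:P * ('X + ('i)%:P) ^+ p).

Definition Hp (p : nat) : {poly algC} := Gp p %/ ('X + (delta4 p)%:P).

(* b lies in Q(a): b belongs to every subfield of algC containing a *)
Definition in_Qadj (a b : algC) : Prop :=
  forall S : {pred algC}, divring_closed S -> a \in S -> b \in S.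

(* zeta_M = e^{2 pi i / M} for M = 2n: n.-root (-1) is exp(i pi / n) *)
Definition zeta4p (p : nat) : algC := (2 * p)%N.-root (-1).

From HB Require Import structures.
From mathcomp Require Import all_boot all_order all_algebra all_field.
From mathcomp Require Import ring zify.
Set Implicit Arguments. Unset Strict Implicit. Unset Printing Implicit Defensive.
Import Order.TTheory GRing.Theory Num.Theory.
Local Open Scope ring_scope.

(* The substitution w = (x + i) / (x - i) turns the equation
   (1 + i) (x + i)^p = (1 - i) (x - i)^p of the roots of G_p into w^p = -i, with
   inverse x = i (w + 1) / (w - 1).  The root -delta_4 of G_p is simple and
   corresponds to w = -delta_4 i, so a root alpha of H_p gives a primitive
   4p-th root of unity w.  Since i = -w^p, alpha and w + 1/w are rational
   functions of each other; since all primitive 4p-th roots are powers of one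
   another and z^n + z^-n is a polynomial in z + 1/z, w + 1/w and zeta + 1/zeta
   generate the same field.  Finally H_p is rational of degree p - 1, while the
   automorphisms w |-> w^k with k = 1 mod 4 fix i and give p - 1 distinct
   conjugates of alpha. *)

Lemma in_QadjP (a b : algC) :
  in_Qadj a b <-> (forall S : divringClosed algC, a \in S -> b \in S).
Proof.
split=> [Qab S aS | Qab S S_divring aS].
  by apply: Qab aS; split; [exact: rpred1 | exact: rpredB | exact: rpred_div].
exact: (Qab (HB.pack S (GRing.isDivringClosed.Build _ _ S_divring))).
Qed.

Lemma in_Qadj_trans (a b c : algC) : in_Qadj a b -> in_Qadj b c -> in_Qadj a c.
Proof. by move=> Qab Qbc S S_divring aS; apply: Qbc (Qab S S_divring aS). Qed.

Definition inv_sum (z : algC) := z + z^-1.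

Lemma rpred_inv_sum_exp (S : divringClosed algC) z n :
  z != 0 -> inv_sum z \in S -> inv_sum (z ^+ n) \in S.
Proof.
move=> z0 Sz; suff [] : inv_sum (z ^+ n) \in S /\ inv_sum (z ^+ n.+1) \in S by [].
elim: n => [|n [Sn Sn1]]; first by rewrite expr1 /inv_sum expr0 invr1 rpredD ?rpred1.
split=> //; have -> : inv_sum (z ^+ n.+2) =
                      inv_sum z * inv_sum (z ^+ n.+1) - inv_sum (z ^+ n).
  by rewrite /inv_sum !exprS; field; rewrite ?mulf_neq0 ?expf_neq0.
by rewrite rpredB ?rpredM.
Qed.

Lemma in_Qadj_inv_sum_prim n (z y : algC) :
  n.-primitive_root z -> y ^+ n = 1 -> in_Qadj (inv_sum z) (inv_sum y).
Proof.
move=> prim_z yn1; have [k ->] := prim_rootP prim_z yn1.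
apply/in_QadjP => S; apply: rpred_inv_sum_exp.
by rewrite (prim_root_eq0 prim_z) -lt0n (prim_order_gt0 prim_z).
Qed.

Local Notation pQtoC := (map_poly (ratr : rat -> algC)).

Lemma X_pm_i_exp n : exists A B : {poly rat},
  ('X + 'i%:P) ^+ n = pQtoC A + 'i%:P * pQtoC B /\
  ('X - 'i%:P) ^+ n = pQtoC A - 'i%:P * pQtoC B.
Proof.
have ii : 'i%:P * 'i%:P = -1 :> {poly algC} by rewrite -polyCM mulCii polyCN.
elim: n => [|n [A [B [EXp EXm]]]].
  by exists 1, 0; rewrite !expr0 !rmorph0 !rmorph1 mulr0 addr0 subr0.
exists ('X * A - B), (A + 'X * B).
rewrite !exprS EXp EXm !(rmorphB, rmorphD, rmorphM) /= map_polyX.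
by split; rewrite -[RHS]addr0 -(mulr0 (pQtoC B)) -(addrN 1) -ii; ring.
Qed.

Lemma map_Im_rect (a b : {poly algC}) :
  a \is a polyOver Num.real -> b \is a polyOver Num.real ->
  map_poly (fun c => 'Im c) ((1 + 'i)%:P * (a + 'i%:P * b)) = a + b.
Proof.
move=> /polyOverP Ra /polyOverP Rb; apply/polyP => k.
rewrite coef_map_id0 ?raddf0 // !(coefCM, coefD).
rewrite (_ : (1 + 'i) * _ = a`_k - b`_k + 'i * (a`_k + b`_k) + ('i * 'i + 1) * b`_k); last by ring.
by rewrite mulCii addNr mul0r addr0 Im_rect ?rpredB ?rpredD.
Qed.

Lemma pQtoC_real (q : {poly rat}) : pQtoC q \is a polyOver Num.real.
Proof. by apply/polyOverP => k; rewrite coef_map Creal_Crat ?Crat_rat. Qed.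

Lemma Gp_rat p : exists g : {poly rat}, Gp p = pQtoC g.
Proof.
have [A [B [EXp _]]] := X_pm_i_exp p.
by exists (A + B); rewrite /Gp EXp map_Im_rect ?pQtoC_real ?rmorphD.
Qed.

Lemma Gp_i2E p : ('i * 2)%:P * Gp p =
  (1 + 'i)%:P * ('X + 'i%:P) ^+ p - (1 - 'i)%:P * ('X - 'i%:P) ^+ p.
Proof.
have [A [B [EXp EXm]]] := X_pm_i_exp p.
rewrite /Gp EXp EXm map_Im_rect ?pQtoC_real // !(polyCD, polyCB, polyCM) polyC1.
ring.
Qed.

Lemma i2_neq0 : 'i * 2 != 0 :> algC.
Proof. by rewrite mulf_neq0 ?neq0Ci ?pnatr_eq0. Qed.

Lemma size_Gp p : (size (Gp p) <= p.+1)%N.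
Proof.
rewrite -(size_Cmul _ i2_neq0) Gp_i2E (leq_trans (size_polyD _ _)) // size_polyN.
rewrite -[in 'X + _](opprK 'i) polyCN !mul_polyC geq_max.
by rewrite !(leq_trans (size_scale_leq _ _)) ?size_exp_XsubC.
Qed.

Lemma onei_neq0 : 1 + 'i != 0 :> algC.
Proof.
apply/eqP => /(congr1 (fun x : algC => 'Im x)).
by rewrite raddfD /= Im_i (Creal_ImP _ _) ?rpred1 // raddf0 add0r => /eqP; rewrite oner_eq0.
Qed.

Lemma one_sub_iE : 1 - 'i = (1 + 'i) * - 'i :> algC.
Proof. by rewrite mulrN mulrDl mul1r mulCii opprD opprK addrC. Qed.

Lemma root_GpE p x :
  root (Gp p) x = ((1 + 'i) * (x + 'i) ^+ p == (1 - 'i) * (x - 'i) ^+ p).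
Proof.
have := congr1 (horner^~ x) (Gp_i2E p); rewrite /= !hornerE => E.
by rewrite -subr_eq0 -E mulf_eq0 (negbTE i2_neq0).
Qed.

Lemma root_Gp_derivE p x : (0 < p)%N -> root (Gp p)^`() x =
  ((1 + 'i) * (x + 'i) ^+ p.-1 == (1 - 'i) * (x - 'i) ^+ p.-1).
Proof.
move=> p_gt0; have := congr1 (fun q => q^`().[x]) (Gp_i2E p).
rewrite /= !(deriv_mulC, derivB, deriv_exp, derivD, derivX, derivC) subr0 mul1r.
rewrite !(hornerE, hornerMn) => E; rewrite ![in RHS]mulrnAr -mulrnBl in E.
rewrite /root -[LHS]orFb -(negbTE i2_neq0) -mulf_eq0 E.
by rewrite mulrn_eq0 gtn_eqF //= subr_eq0.
Qed.

(* Subtracting the two equations forces [x + 'i = 0], and then [x - 'i = 0]. *)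
Lemma Gp_root_simple p x : (1 < p)%N ->
  root (Gp p) x -> ~~ root (Gp p)^`() x.
Proof.
move=> p_gt1; rewrite root_GpE root_Gp_derivE ?(ltnW p_gt1) //.
case: p p_gt1 => [|[|n]] // _ /=.
rewrite (exprSr (x + 'i)) (exprSr (x - 'i)) !mulrA => /eqP E; apply/negP => /eqP E'.
set c := (1 + 'i) * _ in E E'.
have c0 : c = 0.
  have : c * ('i * 2) = 0.
    by rewrite (_ : 'i * 2 = (x + 'i) - (x - 'i)) ?mulrBr ?E ?E' ?subrr //; ring.
  by move/eqP; rewrite mulf_eq0 (negbTE i2_neq0) orbF => /eqP.
have xi : x = - 'i.
  by move/eqP: c0; rewrite /c mulf_eq0 (negbTE onei_neq0) expf_eq0 addr_eq0 => /andP[_ /eqP].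
have : (1 - 'i) * (x - 'i) ^+ n.+1 = 0 by rewrite -E' c0.
rewrite xi -opprD one_sub_iE => /eqP; rewrite !mulf_eq0 oppr_eq0 (negbTE onei_neq0).
by rewrite (negbTE (@neq0Ci algC)) expf_eq0 oppr_eq0 -mulr2n -mulr_natr (negbTE i2_neq0) andbF.
Qed.

Definition cayley (x : algC) := (x + 'i) / (x - 'i).
Definition uncayley (w : algC) := 'i * (w + 1) / (w - 1).

Lemma cayleyK x : x != 'i -> uncayley (cayley x) = x.
Proof.
move=> xi; have xi0 : x - 'i != 0 by rewrite subr_eq0.
rewrite /uncayley /cayley; field.
by rewrite xi0 (_ : x + 'i + -1 * (x - 'i) = 'i * 2) ?i2_neq0 //; ring.
Qed.

Lemma uncayleyK w : w != 1 -> cayley (uncayley w) = w.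
Proof.
move=> w1; have w10 : w - 1 != 0 by rewrite subr_eq0.
rewrite /uncayley /cayley; field.
by rewrite w10 (_ : 'i * (w + 1) + - 'i * (w - 1) = 'i * 2) ?i2_neq0 //; ring.
Qed.

Lemma root_Gp_cayley p x : x != 'i -> root (Gp p) x = (cayley x ^+ p == - 'i).
Proof.
move=> xi; have d0 : (x - 'i) ^+ p != 0 by rewrite expf_neq0 // subr_eq0.
rewrite root_GpE one_sub_iE -mulrA (inj_eq (mulfI onei_neq0)) /cayley expr_div_n.
by rewrite (can2_eq (divfK d0) (mulfK d0)).
Qed.

Lemma root_Gp_neq_i p x : (0 < p)%N -> root (Gp p) x -> x != 'i.
Proof.
move=> p_gt0; apply: contraTneq => ->; rewrite root_GpE subrr expr0n gtn_eqF //.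
by rewrite mulr0 mulf_eq0 (negbTE onei_neq0) expf_eq0 p_gt0 -mulr2n -mulr_natr (negbTE i2_neq0).
Qed.

Lemma exp4_inj p (u v : algC) : odd p ->
  u ^+ 4 = 1 -> v ^+ 4 = 1 -> u ^+ p = v ^+ p -> u = v.
Proof.
move=> p_odd u4 v4 uv; have pp1 : ((p * p) %% 4 = 1)%N by lia.
by rewrite -[u]expr1 -[v]expr1 -pp1 !expr_mod // !exprM uv.
Qed.

Lemma cayley_Nsign (d : algC) : d ^+ 2 = 1 -> cayley (- d) = - 'i * d.
Proof.
move=> d2; have E : (- d - 'i) * (- d + 'i) = 2.
  rewrite (_ : (- d - 'i) * (- d + 'i) = d ^+ 2 - 'i * 'i); last by ring.
  by rewrite d2 mulCii opprK.
have den : - d - 'i != 0.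
  by apply/eqP => h; move: E; rewrite h mul0r => /eqP; rewrite eq_sym pnatr_eq0.
apply: (canLR (mulfK den)).
rewrite (_ : - 'i * d * _ = 'i * d ^+ 2 + 'i * 'i * d); last by ring.
by rewrite d2 mulCii mulr1 mulN1r addrC.
Qed.

Lemma delta4_sqr p : delta4 p ^+ 2 = 1.
Proof. by rewrite /delta4; case: ifP; rewrite ?sqrrN expr1n. Qed.

Lemma cayley_Ndelta4_sqr p : cayley (- delta4 p) ^+ 2 = -1.
Proof. by rewrite cayley_Nsign ?delta4_sqr // ?sqrrN exprMn ?sqrrN sqrCi delta4_sqr mulr1. Qed.

Lemma cayley_Ndelta4_exp4 p : cayley (- delta4 p) ^+ 4 = 1.
Proof. by rewrite (exprM _ 2 2) cayley_Ndelta4_sqr sqrrN expr1n. Qed.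

Lemma cayley_Ndelta4_exp p : odd p -> cayley (- delta4 p) ^+ p = - 'i.
Proof.
move=> p_odd; have p4 : (p %% 4 = 1 \/ p %% 4 = 3)%N by lia.
rewrite -(expr_mod _ (cayley_Ndelta4_exp4 p)) cayley_Nsign ?delta4_sqr //.
rewrite /delta4; case: p4 => ->; rewrite /= ?mulr1 ?expr1 //.
by rewrite mulrN1 opprK exprS sqrCi mulrN1.
Qed.

Lemma N1_neq1 : (-1 : algC) != 1.
Proof. by rewrite lt_eqF // (lt_trans (ltrN10 _) ltr01). Qed.

Lemma dvdn_4p p m : prime p ->
  (m %| 4 * p)%N -> ~~ (m %| 2 * p)%N -> ~~ (m %| 4)%N -> m = (4 * p)%N.
Proof.
move=> p_prime m_dvd m_ndvd2p; have [p_dvd|p_ndvd] := boolP (p %| m)%N; last first.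
  have m_p_coprime : coprime m p by rewrite coprime_sym prime_coprime.
  by rewrite -(Gauss_dvdl _ m_p_coprime) m_dvd.
move: m_dvd m_ndvd2p; have [e -> {p_dvd}] := dvdnP p_dvd.
rewrite !dvdn_pmul2r ?prime_gt0 //.
by case: e => [|[|[|[|[|e]]]]].
Qed.

Lemma prim_root_4p p (z : algC) : prime p ->
  z ^+ (2 * p) = -1 -> z ^+ 4 != 1 -> (4 * p).-primitive_root z.
Proof.
move=> p_prime z2p z4; have p_gt0 := prime_gt0 p_prime.
have z4p : z ^+ (4 * p) = 1.
  have -> : (4 * p = 2 * p * 2)%N by lia.
  by rewrite exprM z2p sqrrN expr1n.
have p4_gt0 : (0 < 4 * p)%N by lia.
have [m prim_z m_dvd] := prim_order_exists p4_gt0 z4p.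
by rewrite -(dvdn_4p p_prime m_dvd) // (prim_order_dvd prim_z) // z2p N1_neq1.
Qed.

Lemma Ndelta4_neq_i p : - delta4 p != 'i.
Proof.
apply: contra_eq_neq (delta4_sqr p) => /(congr1 -%R); rewrite opprK => ->.
by rewrite sqrrN sqrCi N1_neq1.
Qed.

Lemma root_Gp_Ndelta4 p : odd p -> root (Gp p) (- delta4 p).
Proof. by move=> p_odd; rewrite root_Gp_cayley ?Ndelta4_neq_i ?cayley_Ndelta4_exp. Qed.

Lemma Gp_factor p : odd p -> Gp p = Hp p * ('X + (delta4 p)%:P).
Proof.
move=> p_odd; rewrite /Hp divpK // -[delta4 p]opprK polyCN dvdp_XsubCl.
exact: root_Gp_Ndelta4.
Qed.

Lemma root_Gp_of_Hp p x : odd p -> root (Hp p) x -> root (Gp p) x.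
Proof. by move=> p_odd /eqP Hx; rewrite /root Gp_factor // hornerM Hx mul0r. Qed.

(* [- delta4 p] is a simple root of [Gp p], so it is not a root of the quotient. *)
Lemma root_Hp_neq_Ndelta4 p x : (1 < p)%N -> odd p -> root (Hp p) x -> x != - delta4 p.
Proof.
move=> p_gt1 p_odd; apply: contraTneq => ->; apply/negP => /eqP H0.
have := Gp_root_simple p_gt1 (root_Gp_Ndelta4 p_odd).
rewrite Gp_factor // derivM derivD derivX derivC addr0 mulr1 /root !hornerE H0.
by rewrite addNr mulr0 addr0 eqxx.
Qed.

Lemma cayley_root_Hp p x : prime p -> odd p -> root (Hp p) x ->
  [/\ x != 'i, cayley x ^+ p = - 'i & (4 * p).-primitive_root (cayley x)].
Proof.
move=> p_prime p_odd Hx; have p_gt1 := prime_gt1 p_prime.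
have Gx := root_Gp_of_Hp p_odd Hx.
have xi := root_Gp_neq_i (ltnW p_gt1) Gx.
have wp : cayley x ^+ p = - 'i by apply/eqP; rewrite -root_Gp_cayley.
split=> //; apply: prim_root_4p => //; first by rewrite mulnC exprM wp sqrrN sqrCi.
apply: contra (root_Hp_neq_Ndelta4 p_gt1 p_odd Hx) => /eqP w4; apply/eqP.
rewrite -(cayleyK xi) -(cayleyK (Ndelta4_neq_i p)); congr uncayley.
by apply: (exp4_inj p_odd w4 (cayley_Ndelta4_exp4 p)); rewrite wp cayley_Ndelta4_exp.
Qed.

Lemma norm1_Re0_sqr (z : algC) : `|z| = 1 -> 'Re z = 0 -> z ^+ 2 = -1.
Proof.
move=> nz /eqP; rewrite ReE mulf_eq0 invr_eq0 pnatr_eq0 orbF addr_eq0.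
move=> /eqP/(congr1 -%R); rewrite opprK => zc.
by have := normCK z; rewrite nz expr1n -zc mulrN -expr2 => ->; rewrite opprK.
Qed.

Lemma exists_root_Re_gt0 m (y : algC) : ~~ odd m -> y ^+ m = -1 -> 'Re y != 0 ->
  exists y' : algC, [/\ y' ^+ m = -1, 0 <= 'Im y' & 0 < 'Re y'].
Proof.
move=> m_even ym Re_y.
have even_exp u : (- u) ^+ m = u ^+ m by rewrite exprNn -signr_odd (negbTE m_even) mul1r.
have [y1 [y1m Im_y1 Re_y1]] :
    exists y1 : algC, [/\ y1 ^+ m = -1, 0 <= 'Im y1 & 'Re y1 != 0].
  have [Im_ge0|Im_lt0] := real_ge0P (Creal_Im y); first by exists y.
  by exists (- y); rewrite even_exp ym !raddfN /= oppr_ge0 (ltW Im_lt0) oppr_eq0.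
have [Re_lt0|Re_gt0|Re0] := real_ltgtP (Creal_Re y1) (real0 _); last by move/eqP: Re_y1.
  exists (- y1^*); rewrite even_exp -rmorphXn y1m rmorphN1 !raddfN /= Im_conj Re_conj.
  by rewrite opprK oppr_gt0.
by exists y1.
Qed.

Lemma exists_rootN1_Re_gt0 n : (1 < n)%N ->
  exists y : algC, [/\ y ^+ (2 * n) = -1, 0 <= 'Im y & 0 < 'Re y].
Proof.
move=> n_gt1; have n4_gt0 : (0 < 4 * n)%N by lia.
have [y prim_y] := C_prim_root_exists n4_gt0.
have y2n : y ^+ (2 * n) = -1.
  have : (y ^+ (2 * n)) ^+ 2 = 1 by rewrite -exprM mulnC mulnA (prim_expr_order prim_y).
  move/eqP; rewrite sqrf_eq1 -(prim_order_dvd prim_y) => /orP[/dvdn_leq|/eqP //].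
  by lia.
apply: (exists_root_Re_gt0 _ y2n); first by rewrite oddM.
have ny : `|y| = 1.
  apply/eqP; rewrite -(@pexpr_eq1 _ _ (2 * n)) ?normr_ge0 //; last by lia.
  by rewrite -normrX y2n normrN normr1.
apply/eqP => Re0; have : (4 * n %| 4)%N.
  by rewrite (prim_order_dvd prim_y) (exprM y 2 2) (norm1_Re0_sqr ny Re0) sqrrN expr1n.
by move/dvdn_leq; lia.
Qed.

(* [zeta4p p] maximizes the real part among the [2p]-th roots of [-1] in the
   upper half plane, so it cannot be [+- 'i]. *)
Lemma zeta4p_prim p : prime p -> odd p -> (4 * p).-primitive_root (zeta4p p).
Proof.
move=> p_prime p_odd; have p_gt1 := prime_gt1 p_prime.
have p2_gt0 : (0 < 2 * p)%N by lia.
have z2p : zeta4p p ^+ (2 * p) = -1 by rewrite rootCK.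
apply: prim_root_4p => //; apply/eqP => z4.
have z2 : zeta4p p ^+ 2 = -1.
  by rewrite -z2p -(expr_mod (2 * p) z4) (_ : (2 * p) %% 4 = 2)%N //; lia.
have Re_z : 'Re (zeta4p p) = 0.
  have : (zeta4p p - 'i) * (zeta4p p + 'i) = 0.
    rewrite (_ : (zeta4p p - 'i) * _ = zeta4p p ^+ 2 - 'i * 'i); last by ring.
    by rewrite z2 mulCii subrr.
  move/eqP; rewrite mulf_eq0 subr_eq0 addr_eq0 => /orP[] /eqP ->.
    by rewrite Re_i.
  by rewrite raddfN /= Re_i oppr0.
have [y [y2p Im_y Re_y]] := exists_rootN1_Re_gt0 p_gt1.
have := rootC_Re_max p2_gt0 y2p Im_y; rewrite -/(zeta4p p) Re_z.
by move/(lt_le_trans Re_y); rewrite ltxx.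
Qed.

Lemma inv_sum_uncayley w : w != 0 -> w != 1 ->
  inv_sum w = (2 * uncayley w ^+ 2 - 2) / (uncayley w ^+ 2 + 1).
Proof.
move=> w0 w1; have w10 : w - 1 != 0 by rewrite subr_eq0.
have -> : uncayley w ^+ 2 = - ((w + 1) / (w - 1)) ^+ 2.
  by rewrite /uncayley -mulrA exprMn sqrCi mulN1r.
rewrite /inv_sum; field.
rewrite w10 w0 andbT (_ : - (w + 1) ^+ 2 + (w - 1) ^+ 2 = - (w * 4)); last by ring.
by rewrite oppr_eq0 mulf_neq0 ?pnatr_eq0.
Qed.

Lemma uncayley_inv_sum p w : w != 0 -> w != 1 -> w ^+ p = - 'i ->
  uncayley w = (inv_sum (w ^+ p.+1) - inv_sum (w ^+ p.-1)) / (2 * (2 - inv_sum w)).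
Proof.
move=> w0 w1 wp; have w10 : w - 1 != 0 by rewrite subr_eq0.
have p_gt0 : (0 < p)%N.
  by case: p wp => // /eqP; rewrite expr0 -subr_eq0 opprK (negbTE onei_neq0).
have wpS : w ^+ p.+1 = - 'i * w by rewrite exprSr wp.
have wpP : w ^+ p.-1 = - 'i / w by rewrite -wp -(prednK p_gt0) exprSr mulfK.
rewrite /inv_sum wpS wpP invfM invf_div !invrN invCi opprK /uncayley.
field; rewrite w0 w10 (_ : 2 * w - (w * w + 1) = - (w - 1) ^+ 2); last by ring.
by rewrite oppr_eq0 expf_neq0.
Qed.

Lemma in_Qadj_uncayley_inv_sum w : w != 0 -> w != 1 -> in_Qadj (uncayley w) (inv_sum w).
Proof.
move=> w0 w1; apply/in_QadjP => S; rewrite inv_sum_uncayley //.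
move: (uncayley w) => a Sa.
have Sa2 : a ^+ 2 \in S by apply: rpredX.
by apply: rpred_div; [apply: rpredB; [apply: rpredM|] | apply: rpredD]; rewrite ?rpred_nat ?rpred1.
Qed.

Lemma in_Qadj_inv_sum_uncayley p w : w != 0 -> w != 1 -> w ^+ p = - 'i ->
  in_Qadj (inv_sum w) (uncayley w).
Proof.
move=> w0 w1 wp; apply/in_QadjP => S Sw; rewrite (uncayley_inv_sum w0 w1 wp).
have Sexp n : inv_sum (w ^+ n) \in S by apply: rpred_inv_sum_exp.
by apply: rpred_div; [apply: rpredB | apply: rpredM; [|apply: rpredB]]; rewrite ?rpred_nat.
Qed.

Lemma size_minCpoly_le (q : {poly rat}) x :
  q != 0 -> root (pQtoC q) x -> (size (minCpoly x) <= size q)%N.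
Proof.
move=> q0 qx; have [m [-> _ min_m]] := minCpolyP x.
by rewrite size_map_poly dvdp_leq // -min_m.
Qed.

Lemma Gp_neq0 p : odd p -> Gp p != 0.
Proof.
move=> p_odd; apply: contraNneq (_ : ~~ root (Gp p) 0) => [->|]; first by rewrite root0.
rewrite root_GpE add0r sub0r exprNn -signr_odd p_odd expr1 mulN1r mulrN.
rewrite -addr_eq0 -mulrDl (_ : 1 + 'i + (1 - 'i) = 2); last by ring.
by rewrite mulf_eq0 pnatr_eq0 expf_eq0 (negbTE (@neq0Ci algC)) andbF.
Qed.

Lemma Hp_rat p : exists h : {poly rat}, Hp p = pQtoC h.
Proof.
have [g Gg] := Gp_rat p.
exists (g %/ ('X + (if (p %% 4 == 1)%N then 1 else -1)%:P)).
rewrite map_divp -Gg rmorphD /= map_polyX map_polyC /= /Hp /delta4.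
by case: ifP; rewrite ?rmorph1 ?rmorphN1.
Qed.

Lemma size_Hp p : (size (Hp p) <= p)%N.
Proof.
rewrite /Hp size_divp -?size_poly_eq0 ?size_XaddC // leq_subLR.
exact: size_Gp.
Qed.

Lemma size_minCpoly_root_Hp p x : odd p -> root (Hp p) x -> (size (minCpoly x) <= p)%N.
Proof.
move=> p_odd Hx; have [h Hh] := Hp_rat p.
have h0 : h != 0.
  rewrite -(map_poly_eq0 (ratr : {rmorphism rat -> algC})) -Hh.
  by apply: contra_neq (Gp_neq0 p_odd); rewrite Gp_factor // => ->; rewrite mul0r.
rewrite (leq_trans (size_minCpoly_le h0 _)) -?Hh //.
by rewrite -(size_map_poly (ratr : {rmorphism rat -> algC})) -Hh size_Hp.
Qed.

Lemma root_minCpoly_uncayley_exp p w k :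
  (4 * p).-primitive_root w -> w ^+ p = - 'i ->
  coprime k (4 * p) -> (w ^+ k) ^+ p = - 'i ->
  root (minCpoly (uncayley w)) (uncayley (w ^+ k)).
Proof.
move=> prim_w wp k_coprime wkp; have [u uE] := Qn_aut_exists k_coprime.
have w1 := prim_expr_order prim_w.
have ui : u 'i = 'i.
  by apply: oppr_inj; rewrite -rmorphN -{1}wp rmorphXn uE.
have -> : uncayley (w ^+ k) = u (uncayley w).
  by rewrite /uncayley fmorph_div rmorphM rmorphD rmorphB rmorph1 ui uE.
by rewrite -(minCpoly_aut u) root_minCpoly.
Qed.

Lemma coprime4 n : coprime n 4 = odd n.
Proof. by rewrite (coprimeMr n 2 2) coprimen2 andbb. Qed.

(* The exponents [4 r + p ^ 2], [0 < r < p], are [1] mod [4], prime to [p], and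
   pairwise distinct mod [4 p]. *)
Lemma size_minCpoly_uncayley p w : prime p -> odd p ->
  (4 * p).-primitive_root w -> w ^+ p = - 'i -> (p <= size (minCpoly (uncayley w)))%N.
Proof.
move=> p_prime p_odd prim_w wp; have p_gt1 := prime_gt1 p_prime.
pose k r := (4 * r + p * p)%N.
have wkp r : (w ^+ k r) ^+ p = - 'i.
  have Ni4 : (- 'i) ^+ 4 = 1 :> algC by rewrite (exprM _ 2 2) sqrrN sqrCi sqrrN expr1n.
  rewrite -exprM mulnC exprM wp -(expr_mod _ Ni4) (_ : k r %% 4 = 1)%N //.
  by rewrite /k; lia.
have wk1 r : w ^+ k r != 1.
  by apply: contra_eq_neq (wkp r) => ->; rewrite expr1n -subr_eq0 opprK onei_neq0.
pose rs := [seq uncayley (w ^+ k r) | r <- iota 1 p.-1].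
have roots : all (root (minCpoly (uncayley w))) rs.
  apply/allP => x /mapP[r]; rewrite mem_iota => /andP[r_gt0 r_lt] ->.
  apply: (root_minCpoly_uncayley_exp prim_w wp _ (wkp r)).
  rewrite (coprimeMr _ 4) coprime4 /k oddD !oddM p_odd /= coprime_sym prime_coprime //.
  rewrite (dvdn_addl _ (dvdn_mulr p (dvdnn p))) Gauss_dvdr ?coprime4 //.
  by apply/negP => /dvdn_leq; lia.
have rs_uniq : uniq rs.
  rewrite map_inj_in_uniq ?iota_uniq // => r1 r2.
  rewrite !mem_iota => /andP[_ r1_lt] /andP[_ r2_lt] /(congr1 cayley).
  rewrite !uncayleyK // => /eqP; rewrite (eq_prim_root_expr prim_w) eqn_modDr.
  by rewrite -!muln_modr !modn_small ?eqn_mul2l //=; [move/eqP | lia | lia].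
have := max_poly_roots (negbT (minCpoly_eq0 _)) roots rs_uniq.
by rewrite size_map size_iota prednK // prime_gt0.
Qed.

Theorem lemma7 (p : nat) (alpha : algC) :
  prime p -> odd p -> root (Hp p) alpha ->
  (forall b : algC,
     in_Qadj alpha b <-> in_Qadj (zeta4p p + (zeta4p p)^-1) b) /\
  (size (minCpoly alpha)).-1 = p.-1 /\
  (forall b : algC,
     in_Qadj ((zeta4p p) ^+ 4 + ((zeta4p p) ^+ 4)^-1) b -> in_Qadj alpha b).
Proof.
move=> p_prime p_odd H_alpha.
have [alpha_i wp prim_w] := cayley_root_Hp p_prime p_odd H_alpha.
set w := cayley alpha in wp prim_w.
have alphaE : alpha = uncayley w by rewrite cayleyK.
have w0 : w != 0 by rewrite (prim_root_eq0 prim_w) muln_eq0 negb_or (gtn_eqF (prime_gt0 p_prime)).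
have w1 : w != 1 by apply: contra_eq_neq wp => ->; rewrite expr1n -subr_eq0 opprK onei_neq0.
have prim_z := zeta4p_prim p_prime p_odd.
have Q_alpha_w : in_Qadj alpha (inv_sum w) by rewrite alphaE; apply: in_Qadj_uncayley_inv_sum.
have Q_w_alpha : in_Qadj (inv_sum w) alpha by rewrite alphaE; apply: in_Qadj_inv_sum_uncayley wp.
have Q_z_w := in_Qadj_inv_sum_prim prim_z (prim_expr_order prim_w).
have Q_w_z := in_Qadj_inv_sum_prim prim_w (prim_expr_order prim_z).
have Q_z_alpha := in_Qadj_trans Q_z_w Q_w_alpha.
have Q_alpha_z := in_Qadj_trans Q_alpha_w Q_w_z.
have Q_z_z4 : in_Qadj (inv_sum (zeta4p p)) (inv_sum (zeta4p p ^+ 4)).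
  by apply: (in_Qadj_inv_sum_prim prim_z); rewrite exprAC (prim_expr_order prim_z) expr1n.
split; [|split].
- by move=> b; split; apply: in_Qadj_trans.
- have le_p := size_minCpoly_root_Hp p_odd H_alpha.
  have := size_minCpoly_uncayley p_prime p_odd prim_w wp; rewrite -alphaE => ge_p.
  by congr _.-1; apply/eqP; rewrite eqn_leq le_p ge_p.
- by move=> b; apply: in_Qadj_trans (in_Qadj_trans Q_alpha_z Q_z_z4).
Qed.
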